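(* Let $f,g,h$ be smooth real functions of one variable with $f\neq 0$, $g\neq 0$, $g'\neq 0$. Then the equation $$u_t-f(u)u_x-g(u)u_{xx}+h(u)u_x^2=0$$ is strictly self-adjoint if and only if $$h(u)=-\frac{g(u)}{u}-g'(u).$$
   Context: For a differential equation $\mathfrak{F}[u]=0$ in independent variables $t,x$ and dependent variable $u$, introduce a new dependent variable $\nu=\nu(t,x)$. The formal Lagrangian is $\mathfrak{L}=\nu\mathfrak{F}$ and the adjoint is $\mathfrak{F}^*=\frac{\delta\mathfrak{L}}{\delta u}$, where $\frac{\delta}{\delta u}=\frac{\partial}{\partial u}-D_t\frac{\partial}{\partial u_t}-D_x\frac{\partial}{\partial u_x}+D_x^2\frac{\partial}{\partial u_{xx}}$ and $D_t,D_x$ are total derivatives. The equation is strictly self-adjoint if $\mathfrak{F}^*|_{\nu=u}=\lambda\mathfrak{F}$ for some coefficient $\lambda=\lambda(t,x,u,\dots)$ (with derivatives of $\nu$ replaced by the corresponding derivatives of $u$). *)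

From Stdlib Require Import Reals List.
From Coquelicot Require Import Coquelicot.
Open Scope R_scope.

Definition smooth1 (f : R -> R) : Prop := forall n x, ex_derive_n f n x.

Definition dt (w : R -> R -> R) : R -> R -> R :=
  fun t x => Derive (fun s => w s x) t.
Definition dx (w : R -> R -> R) : R -> R -> R :=
  fun t x => Derive (fun y => w t y) x.

(** Iterated partial derivative along a list of directions
    (true = d/dt, false = d/dx), applied right-to-left. *)
Fixpoint pd (l : list bool) (w : R -> R -> R) : R -> R -> R :=
  match l with
  | nil => w
  | b :: l' => if b then dt (pd l' w) else dx (pd l' w)
  end.

Definition smooth2 (w : R -> R -> R) : Prop :=
  forall l : list bool,
    (forall t x, ex_derive (fun s => pd l w s x) t /\
                 ex_derive (fun y => pd l w t y) x) /\
    (forall p : R * R, continuous (fun q : R * R => pd l w (fst q) (snd q)) p).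

(** A second-order evolution-type differential function
    F(t, x, u, u_t, u_x, u_xx). *)
Definition DiffFun := R -> R -> R -> R -> R -> R -> R.

Definition formal_lagrangian (F : DiffFun) :
  R -> R -> R -> R -> R -> R -> R -> R :=
  fun t x u ut ux uxx nu => nu * F t x u ut ux uxx.

Definition L_u  (L : R -> R -> R -> R -> R -> R -> R -> R) :=
  fun t x u ut ux uxx nu => Derive (fun z => L t x z ut ux uxx nu) u.
Definition L_ut (L : R -> R -> R -> R -> R -> R -> R -> R) :=
  fun t x u ut ux uxx nu => Derive (fun z => L t x u z ux uxx nu) ut.
Definition L_ux (L : R -> R -> R -> R -> R -> R -> R -> R) :=
  fun t x u ut ux uxx nu => Derive (fun z => L t x u ut z uxx nu) ux.
Definition L_uxx (L : R -> R -> R -> R -> R -> R -> R -> R) :=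
  fun t x u ut ux uxx nu => Derive (fun z => L t x u ut ux z nu) uxx.

Definition along (P : R -> R -> R -> R -> R -> R -> R -> R)
  (u nu : R -> R -> R) : R -> R -> R :=
  fun t x => P t x (u t x) (dt u t x) (dx u t x) (dx (dx u) t x) (nu t x).

(** The adjoint  F* = delta L / delta u
      = dL/du - D_t dL/du_t - D_x dL/du_x + D_x^2 dL/du_xx,
    evaluated along u(t,x), nu(t,x); total derivatives are the partial
    derivatives of the composite functions of (t,x). *)
Definition adjoint_along (F : DiffFun) (u nu : R -> R -> R) (t x : R) : R :=
  let L := formal_lagrangian F in
  along (L_u L) u nu t x
  - dt (along (L_ut L) u nu) t x
  - dx (along (L_ux L) u nu) t x
  + dx (dx (along (L_uxx L) u nu)) t x.

Definition eval_along (F : DiffFun) (u : R -> R -> R) (t x : R) : R :=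
  F t x (u t x) (dt u t x) (dx u t x) (dx (dx u) t x).

(** Strict self-adjointness: there is a coefficient lambda, a function of
    (t, x, u, u_t, u_x, u_tt, u_tx, u_xx), such that F*|_{nu = u} = lambda F
    identically, i.e. along every smooth u at every point. *)
Definition strictly_self_adjoint (F : DiffFun) : Prop :=
  exists lambda : R -> R -> R -> R -> R -> R -> R -> R -> R,
    forall u : R -> R -> R, smooth2 u ->
    forall t x : R,
      adjoint_along F u u t x =
      lambda t x (u t x) (dt u t x) (dx u t x)
             (dt (dt u) t x) (dt (dx u) t x) (dx (dx u) t x)
      * eval_along F u t x.

Definition nonlin_eq (f g h : R -> R) : DiffFun :=
  fun _ _ u ut ux uxx => ut - f u * ux - g u * uxx + h u * ux ^ 2.

(* Along [nu = u] the adjoint of [F = u_t - f(u) u_x - g(u) u_xx + h(u) u_x^2]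
   satisfies [F* = - F - 2 u_xx phi(u) - u_x^2 phi'(u)] with
   [phi(y) = y h(y) + g(y) + y g'(y)].  If [phi] vanishes identically, [F* = -F].
   Conversely, a function solving [F = 0] at a point where [u = y], [u_x = 0],
   [u_xx = 1] gives [F* = -2 phi(y)] there, which must equal [lambda F = 0].
   Finally [phi = 0] on [y <> 0] is the stated formula for [h], and it extends to
   [y = 0] by continuity. *)

From Stdlib Require Import Reals Lra.
From Coquelicot Require Import Coquelicot.
Open Scope R_scope.

Lemma smooth1_ex_derive (k : R -> R) (y : R) : smooth1 k -> ex_derive k y.
Proof. intros Hk. exact (Hk 1%nat y). Qed.

Lemma smooth1_ex_derive_Derive (k : R -> R) (y : R) :
  smooth1 k -> ex_derive (Derive k) y.
Proof. intros Hk. exact (Hk 2%nat y). Qed.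

Local Hint Resolve smooth1_ex_derive smooth1_ex_derive_Derive : core.

(* [auto_derive] writes [Derive (fun z => k z)], which [ring] would treat as an
   atom different from [Derive k]. *)
Ltac eta_reduce :=
  repeat match goal with
  | |- context [fun z : R => ?k z] => progress change (fun z : R => k z) with k
  end.

Ltac derive_ring :=
  apply is_derive_unique; auto_derive; repeat split; auto; eta_reduce; ring.

Lemma continuous_eq0_off0 (phi : R -> R) :
  continuous phi 0 -> (forall y, y <> 0 -> phi y = 0) -> phi 0 = 0.
Proof.
  intros Hc Hoff.
  assert (Hlim_phi0 : is_lim phi 0 (phi 0)).
  { apply is_lim_continuity, continuity_pt_filterlim, Hc. }
  assert (Hlim0 : is_lim phi 0 0).
  { apply (is_lim_ext_loc (fun _ => 0)); [|apply is_lim_const].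
    exists (mkposreal 1 Rlt_0_1). intros y _ Hy. symmetry. exact (Hoff y Hy). }
  apply is_lim_unique in Hlim_phi0. apply is_lim_unique in Hlim0.
  rewrite Hlim_phi0 in Hlim0. now injection Hlim0.
Qed.

Definition quad (a b c d : R) : R -> R -> R :=
  fun t x => a + b * t + c * x + d * x ^ 2.

Lemma dt_quad a b c d t x : dt (quad a b c d) t x = b.
Proof. unfold dt, quad. derive_ring. Qed.

Lemma dx_quad a b c d t x : dx (quad a b c d) t x = c + 2 * d * x.
Proof. unfold dx, quad. derive_ring. Qed.

Lemma dxx_quad a b c d t x : dx (dx (quad a b c d)) t x = 2 * d.
Proof.
  unfold dx at 1. rewrite (Derive_ext _ (fun y => c + 2 * d * y)) by apply dx_quad.
  derive_ring.
Qed.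

Lemma pd_quad (a b c d : R) (l : list bool) :
  exists a' b' c' d', forall t x, pd l (quad a b c d) t x = quad a' b' c' d' t x.
Proof.
  induction l as [|[|] l [a' [b' [c' [d' E]]]]]; simpl.
  - now exists a, b, c, d.
  - exists b', 0, 0, 0. intros t x. unfold dt.
    rewrite (Derive_ext _ (fun s => quad a' b' c' d' s x)) by auto.
    transitivity b'; [apply dt_quad | unfold quad; ring].
  - exists c', 0, (2 * d'), 0. intros t x. unfold dx.
    rewrite (Derive_ext _ (fun y => quad a' b' c' d' t y)) by auto.
    transitivity (c' + 2 * d' * x); [apply dx_quad | unfold quad; ring].
Qed.

Lemma continuous_Rplus_fun {U : UniformSpace} (f g : U -> R) (p : U) :
  continuous f p -> continuous g p -> continuous (fun q => f q + g q) p.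
Proof. exact (@continuous_plus U R_AbsRing R_NormedModule f g p). Qed.

Lemma continuous_Rmult_fun {U : UniformSpace} (f g : U -> R) (p : U) :
  continuous f p -> continuous g p -> continuous (fun q => f q * g q) p.
Proof. exact (@continuous_mult U R_AbsRing f g p). Qed.

Lemma continuous_quad (a b c d : R) (p : R * R) :
  continuous (fun q : R * R => quad a b c d (fst q) (snd q)) p.
Proof.
  destruct p as [t x]. unfold quad. simpl.
  repeat first [ apply continuous_Rplus_fun | apply continuous_Rmult_fun
               | apply continuous_fst | apply continuous_snd | apply continuous_const ].
Qed.

Lemma smooth2_quad (a b c d : R) : smooth2 (quad a b c d).
Proof.
  intros l. destruct (pd_quad a b c d l) as [a' [b' [c' [d' E]]]]. split.
  - intros t x. split.
    + apply (ex_derive_ext (fun s => quad a' b' c' d' s x)); [auto|].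
      unfold quad. auto_derive; auto.
    + apply (ex_derive_ext (fun y => quad a' b' c' d' t y)); [auto|].
      unfold quad. auto_derive; auto.
  - intros p. apply (continuous_ext (fun q : R * R => quad a' b' c' d' (fst q) (snd q))).
    + intros; now rewrite E.
    + apply continuous_quad.
Qed.

Lemma smooth2_ex_derive_x (u : R -> R -> R) (t y : R) :
  smooth2 u -> ex_derive (fun y => u t y) y.
Proof. intros Hu. exact (proj2 (proj1 (Hu nil) t y)). Qed.

Lemma smooth2_ex_derive_xx (u : R -> R -> R) (t y : R) :
  smooth2 u -> ex_derive (fun y => dx u t y) y.
Proof. intros Hu. exact (proj2 (proj1 (Hu (cons false nil)) t y)). Qed.

Section NonlinEq.

Variables f g h : R -> R.
Hypothesis Hf : smooth1 f.
Hypothesis Hg : smooth1 g.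
Hypothesis Hh : smooth1 h.

Let L := formal_lagrangian (nonlin_eq f g h).

Lemma L_u_nonlin_eq t x u ut ux uxx nu :
  L_u L t x u ut ux uxx nu =
  nu * (- Derive f u * ux - Derive g u * uxx + Derive h u * ux ^ 2).
Proof. unfold L_u, L, formal_lagrangian, nonlin_eq. derive_ring. Qed.

Lemma L_ut_nonlin_eq t x u ut ux uxx nu : L_ut L t x u ut ux uxx nu = nu.
Proof. unfold L_ut, L, formal_lagrangian, nonlin_eq. derive_ring. Qed.

Lemma L_ux_nonlin_eq t x u ut ux uxx nu :
  L_ux L t x u ut ux uxx nu = nu * (- f u + 2 * h u * ux).
Proof. unfold L_ux, L, formal_lagrangian, nonlin_eq. derive_ring. Qed.

Lemma L_uxx_nonlin_eq t x u ut ux uxx nu : L_uxx L t x u ut ux uxx nu = - nu * g u.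
Proof. unfold L_uxx, L, formal_lagrangian, nonlin_eq. derive_ring. Qed.

Definition self_adjoint_defect (y : R) : R := y * h y + g y + y * Derive g y.

Lemma Derive_self_adjoint_defect (y : R) :
  Derive self_adjoint_defect y =
  h y + y * Derive h y + 2 * Derive g y + y * Derive (Derive g) y.
Proof. unfold self_adjoint_defect. derive_ring. Qed.

Lemma self_adjoint_defect_eq0_off0 :
  (forall y, y <> 0 -> self_adjoint_defect y = 0) -> forall y, self_adjoint_defect y = 0.
Proof.
  intros Hoff y. destruct (Req_dec y 0) as [-> | Hy]; [|exact (Hoff y Hy)].
  apply continuous_eq0_off0; [|exact Hoff].
  apply (@ex_derive_continuous R_AbsRing R_NormedModule).
  unfold self_adjoint_defect. auto_derive; repeat split; auto.
Qed.

Lemma h_formula_iff_defect_eq0 (y : R) :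
  y <> 0 -> h y = - g y / y - Derive g y <-> self_adjoint_defect y = 0.
Proof.
  intros Hy. unfold self_adjoint_defect. split.
  - intros ->. field. exact Hy.
  - intros H0. apply (Rmult_eq_reg_l y); [|exact Hy]. field_simplify; [lra | exact Hy].
Qed.

Section Along.

Variables (u : R -> R -> R) (t : R).
Hypothesis ux_ex : forall y, ex_derive (fun y => u t y) y.
Hypothesis uxx_ex : forall y, ex_derive (fun y => dx u t y) y.

Lemma dx_along_L_ux (x : R) :
  dx (along (L_ux L) u u) t x =
  dx u t x * (- f (u t x) + 2 * h (u t x) * dx u t x)
  + u t x * (- Derive f (u t x) * dx u t x
             + 2 * (Derive h (u t x) * dx u t x ^ 2 + h (u t x) * dx (dx u) t x)).
Proof.
  unfold dx at 1, along.
  rewrite (Derive_ext _ (fun y => u t y * (- f (u t y) + 2 * h (u t y) * dx u t y)))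
    by (intro; apply L_ux_nonlin_eq).
  unfold dx. derive_ring.
Qed.

Lemma dx_along_L_uxx (x : R) :
  dx (along (L_uxx L) u u) t x =
  - (dx u t x * g (u t x) + u t x * Derive g (u t x) * dx u t x).
Proof.
  unfold dx at 1, along.
  rewrite (Derive_ext _ (fun y => - u t y * g (u t y))) by (intro; apply L_uxx_nonlin_eq).
  unfold dx. derive_ring.
Qed.

Lemma dxx_along_L_uxx (x : R) :
  dx (dx (along (L_uxx L) u u)) t x =
  - (dx (dx u) t x * g (u t x) + 2 * Derive g (u t x) * dx u t x ^ 2
     + u t x * (Derive (Derive g) (u t x) * dx u t x ^ 2
                + Derive g (u t x) * dx (dx u) t x)).
Proof.
  unfold dx at 1.
  rewrite (Derive_ext _ (fun y => - (dx u t y * g (u t y) + u t y * Derive g (u t y) * dx u t y)))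
    by apply dx_along_L_uxx.
  unfold dx. derive_ring.
Qed.

Lemma adjoint_along_nonlin_eq (x : R) :
  adjoint_along (nonlin_eq f g h) u u t x =
  - eval_along (nonlin_eq f g h) u t x
  - 2 * dx (dx u) t x * self_adjoint_defect (u t x)
  - dx u t x ^ 2 * Derive self_adjoint_defect (u t x).
Proof.
  assert (dt_along_L_ut : dt (along (L_ut L) u u) t x = dt u t x).
  { unfold dt, along. apply Derive_ext. intro. apply L_ut_nonlin_eq. }
  unfold adjoint_along. fold L.
  rewrite dt_along_L_ut, dx_along_L_ux, dxx_along_L_uxx, Derive_self_adjoint_defect.
  unfold along, eval_along, self_adjoint_defect, nonlin_eq.
  rewrite L_u_nonlin_eq. ring.
Qed.

End Along.

Lemma strictly_self_adjoint_defect_eq0 :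
  strictly_self_adjoint (nonlin_eq f g h) -> forall y, self_adjoint_defect y = 0.
Proof.
  intros [lambda Hlambda] y.
  (* [u] solves the equation at the origin, where [u = y], [u_x = 0], [u_xx = 1]. *)
  set (u := quad y (g y) 0 (/ 2)).
  assert (Hu : smooth2 u) by apply smooth2_quad.
  pose proof (Hlambda u Hu 0 0) as Hadj.
  rewrite (adjoint_along_nonlin_eq u 0 (fun y => smooth2_ex_derive_x u 0 y Hu)
             (fun y => smooth2_ex_derive_xx u 0 y Hu)) in Hadj.
  assert (u00 : u 0 0 = y) by (unfold u, quad; ring).
  assert (ut00 : dt u 0 0 = g y) by apply dt_quad.
  assert (ux00 : dx u 0 0 = 0) by (unfold u; rewrite dx_quad; ring).
  assert (uxx00 : dx (dx u) 0 0 = 1) by (unfold u; rewrite dxx_quad; field).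
  assert (F00 : eval_along (nonlin_eq f g h) u 0 0 = 0).
  { unfold eval_along, nonlin_eq. rewrite u00, ut00, ux00, uxx00. ring. }
  rewrite F00, u00, ux00, uxx00 in Hadj. lra.
Qed.

Lemma defect_eq0_strictly_self_adjoint :
  (forall y, self_adjoint_defect y = 0) -> strictly_self_adjoint (nonlin_eq f g h).
Proof.
  intros Hdefect. exists (fun _ _ _ _ _ _ _ _ => -1). intros u Hu t x.
  assert (Hdefect' : forall y, Derive self_adjoint_defect y = 0).
  { intro y. rewrite (Derive_ext _ (fun _ => 0)) by exact Hdefect. apply Derive_const. }
  rewrite (adjoint_along_nonlin_eq u t (fun y => smooth2_ex_derive_x u t y Hu)
             (fun y => smooth2_ex_derive_xx u t y Hu)).
  rewrite Hdefect, Hdefect'. ring.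
Qed.

End NonlinEq.

Theorem corollary2 (f g h : R -> R)
  (Hf : smooth1 f) (Hg : smooth1 g) (Hh : smooth1 h)
  (Hf0 : exists y, f y <> 0) (Hg0 : exists y, g y <> 0)
  (Hg'0 : exists y, Derive g y <> 0) :
  strictly_self_adjoint (nonlin_eq f g h) <->
  (forall y : R, y <> 0 -> h y = - g y / y - Derive g y).
Proof.
  split.
  - intros Hsa y Hy. apply (h_formula_iff_defect_eq0 g h y Hy).
    exact (strictly_self_adjoint_defect_eq0 f g h Hf Hg Hh Hsa y).
  - intros Hformula.
    apply (defect_eq0_strictly_self_adjoint f g h Hf Hg Hh).
    apply (self_adjoint_defect_eq0_off0 g h Hg Hh).
    intros y Hy. apply (h_formula_iff_defect_eq0 g h y Hy), Hformula, Hy.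
Qed.
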